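(* Let $\bar u=(u_\beta)_{\beta<\alpha}$ be a densely non-increasing sequence of elements of a linear order $(U,<)$. If $\bar u$ is not non-increasing, then there exists a greatest ordinal $\alpha'<\alpha$ such that $(u_\beta)_{\beta<\alpha'}$ is non-increasing; moreover $\alpha'$ is a limit ordinal and $\bar u$ is not ultimately constant in $\alpha'$.
   Context: A sequence $(u_\beta)_{\beta<\alpha}$ indexed by a countable ordinal is non-increasing if $\beta<\beta'<\alpha$ implies $u_\beta\ge u_{\beta'}$. It is constant on $[\gamma,\gamma')$ if $u_\beta=u_\gamma$ for all $\gamma\le\beta<\gamma'$. It is densely non-increasing if for all $\gamma<\gamma'\le\alpha$, either it is constant on $[\gamma,\gamma')$ or there exist $\gamma\le\beta<\beta'<\gamma'$ with $u_\beta>u_{\beta'}$. For a limit ordinal $\gamma\le\alpha$, the sequence is ultimately constant in $\gamma$ if there is $\gamma'<\gamma$ such that it is constant on $[\gamma',\gamma)$. *)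

From HB Require Import structures.
From mathcomp Require Import all_boot all_order.
Set Implicit Arguments. Unset Strict Implicit. Unset Printing Implicit Defensive.
Import Order.TTheory.
Local Open Scope order_scope.

(* A countable ordinal alpha is represented by (the order type of) a countable
   well-ordered type T with strict order lt: elements of T are the ordinals
   beta < alpha.  Positions gamma <= alpha are elements of [option T], where
   [None] stands for alpha itself and [Some b] for the ordinal b < alpha. *)

Definition countable_wellorder (T : Type) (lt : T -> T -> Prop) : Prop :=
  [/\ (forall x, ~ lt x x),
      (forall x y z, lt x y -> lt y z -> lt x z),
      (forall x y, lt x y \/ x = y \/ lt y x),
      well_founded lt &
      exists f : T -> nat, injective f].

Section OrdSeq.
Variables (T : Type) (lt : T -> T -> Prop).
Variables (d : Order.disp_t) (U : orderType d) (u : T -> U).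

Definition leT (x y : T) : Prop := lt x y \/ x = y.

Definition below (x : T) (g : option T) : Prop :=
  match g with None => True | Some a => lt x a end.

Definition nonincr_below (g : option T) : Prop :=
  forall x y, lt x y -> below y g -> (u y <= u x).

Definition nonincreasing : Prop := nonincr_below None.

Definition constant_on (g : T) (g' : option T) : Prop :=
  forall x, leT g x -> below x g' -> u x = u g.

Definition densely_nonincreasing : Prop :=
  forall (g : T) (g' : option T), below g g' ->
    constant_on g g' \/
    exists b b', [/\ leT g b, lt b b', below b' g' & u b' < u b].

Definition is_limit (a : T) : Prop :=
  (exists x, lt x a) /\ (forall x, lt x a -> exists y, lt x y /\ lt y a).

Definition ultimately_constant_in (a : T) : Prop :=
  exists g, lt g a /\ constant_on g (Some a).

End OrdSeq.

From HB Require Import structures.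
From mathcomp Require Import all_boot all_order.
From Stdlib Require Import Classical.
Set Implicit Arguments. Unset Strict Implicit. Unset Printing Implicit Defensive.
Import Order.TTheory.
Local Open Scope order_scope.

(* Take the least a into which u strictly increases, i.e. with u x < u a for
   some x < a.  Then u is non-increasing below a and below no larger ordinal.
   If u were constant on some [g, a), density applied to [g, a + 1) would
   produce a strict descent inside [g, a], which is impossible since u is
   constant on [g, a) and u a > u x >= u g.  In particular a is not a
   successor x + 1, as u is trivially constant on [x, x + 1). *)

Lemma wf_exists_minimal (T : Type) (lt : T -> T -> Prop) (P : T -> Prop) :
  well_founded lt -> (exists x, P x) ->
  exists x, P x /\ forall y, P y -> ~ lt y x.
Proof.
move=> wf [x0 Px0]; apply: NNPP => no_min.
suff: forall x, Acc lt x -> ~ P x by move/(_ x0 (wf x0)).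
move=> x; elim=> {}x _ IH Px; apply: no_min; exists x; split=> // y Py lyx.
exact: IH lyx Py.
Qed.

Section MinimalAscent.
Variables (T : Type) (lt : T -> T -> Prop).
Variables (d : Order.disp_t) (U : orderType d) (u : T -> U).
Hypothesis ltT_trans : forall x y z, lt x y -> lt y z -> lt x z.
Hypothesis ltT_total : forall x y, lt x y \/ x = y \/ lt y x.
Hypothesis ltT_wf : well_founded lt.

Definition ascent_at (a : T) : Prop := exists2 x, lt x a & u x < u a.

Lemma nonincr_belowP (a : T) :
  nonincr_below lt u (Some a) <-> forall y, lt y a -> ~ ascent_at y.
Proof.
split=> [nib y lya [x lxy uxy] | no_ascent x y lxy lya].
  by have := nib x y lxy lya; rewrite leNgt uxy.
rewrite leNgt; apply/negP => uyx.
by apply: (no_ascent y lya); exists x.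
Qed.

Lemma not_nonincreasing_ascent :
  ~ nonincreasing lt u -> exists a, ascent_at a.
Proof.
move=> not_ni; apply: NNPP => no_ascent; apply: not_ni => x y lxy _.
by rewrite leNgt; apply/negP => uxy; apply: no_ascent; exists y, x.
Qed.

Lemma below_trans (x y : T) (g : option T) :
  lt x y -> below lt y g -> below lt x g.
Proof. by case: g => //= a; apply: ltT_trans. Qed.

Lemma nonincr_below_le (a b : T) :
  ascent_at a -> nonincr_below lt u (Some b) -> leT lt b a.
Proof.
move=> [x lxa uxa] nib.
case: (ltT_total b a) => [|[|]]; [by left | by right | move=> lab].
by have := nib x a lxa lab; rewrite leNgt uxa.
Qed.

(* The position a + 1, which is alpha itself when a is the last element. *)
Lemma successor_position (a : T) :
  exists g', below lt a g' /\ forall b, below lt b g' -> leT lt b a.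
Proof.
have le_of_not_gt b : ~ lt a b -> leT lt b a.
  by case: (ltT_total b a) => [|[|]]; [left | right | ].
case: (classic (exists z, lt a z)) => [above_a | no_above_a].
  have [z [laz zmin]] := wf_exists_minimal ltT_wf above_a.
  by exists (Some z); split=> // b /= lbz; apply: le_of_not_gt => lab; apply: zmin lbz.
by exists None; split=> // b _; apply: le_of_not_gt => lab; apply: no_above_a; exists b.
Qed.

Lemma ascent_not_ultimately_constant (a : T) :
  densely_nonincreasing lt u -> ascent_at a -> nonincr_below lt u (Some a) ->
  ~ ultimately_constant_in lt u a.
Proof.
move=> dn [x lxa uxa] nib [g [lga cst]].
have ug_lt_ua : u g < u a.
  apply: le_lt_trans uxa.
  case: (ltT_total g x) => [lgx | [-> | lxg]] //.
  - by rewrite (cst x (or_introl lgx) lxa).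
  - exact: nib.
have [g' [ag' le_a]] := successor_position a.
case: (dn g g' (below_trans lga ag')) => [cst' | [b [b' [gb lbb' b'g' ub'b]]]].
  by move: ug_lt_ua; rewrite (cst' a (or_introl lga) ag') ltxx.
have lba : lt b a by case: (le_a b' b'g') => [lb'a | <-]; [apply: ltT_trans lb'a |].
rewrite (cst b gb lba) in ub'b.
case: (le_a b' b'g') => [lb'a | b'a].
  have gb' : leT lt g b' by left; case: gb => [lgb | ->]; [apply: ltT_trans lbb' |].
  by rewrite (cst b' gb' lb'a) ltxx in ub'b.
by move: (lt_trans ub'b ug_lt_ua); rewrite b'a ltxx.
Qed.

Lemma not_ultimately_constant_limit (a : T) :
  (exists x, lt x a) -> ~ ultimately_constant_in lt u a -> is_limit lt a.
Proof.
move=> a_pos not_uc; split=> // x lxa; apply: NNPP => no_between.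
apply: not_uc; exists x; split=> // y [lxy | <-] lya //.
by case: no_between; exists y.
Qed.

End MinimalAscent.

Theorem mainTheorem12 (T : Type) (lt : T -> T -> Prop)
  (d : Order.disp_t) (U : orderType d) (u : T -> U) :
  countable_wellorder lt ->
  densely_nonincreasing lt u ->
  ~ nonincreasing lt u ->
  exists a : T,
    [/\ nonincr_below lt u (Some a),
        (forall b : T, nonincr_below lt u (Some b) -> leT lt b a),
        is_limit lt a &
        ~ ultimately_constant_in lt u a].
Proof.
move=> [_ ltT_trans ltT_total ltT_wf _] dn not_ni.
have [a [asc_a amin]] := wf_exists_minimal ltT_wf (not_nonincreasing_ascent not_ni).
have nib_a : nonincr_below lt u (Some a).
  by apply/nonincr_belowP => y lya asc_y; apply: amin asc_y lya.
have not_uc := ascent_not_ultimately_constant ltT_trans ltT_total ltT_wf dn asc_a nib_a.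
exists a; split=> //.
- by move=> b; apply: (nonincr_below_le ltT_total asc_a).
- by case: asc_a => x lxa _; apply: not_ultimately_constant_limit not_uc; exists x.
Qed.
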